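(* Let $K$ be a field and $m,n,r$ positive integers. Let $R=K[x_{ij}^k \mid 1\le i\le m,\ 1\le j\le n,\ 1\le k\le r]$ and let $I_{mn}^r\subseteq R$ be the ideal generated by all $2$-minors of the horizontal concatenation $H=(X_1\ \cdots\ X_r)$ and all $2$-minors of the vertical concatenation $V$ (the $X_k$ stacked on top of each other) of the matrices $X_k=(x_{ij}^k)_{1\le i\le m,1\le j\le n}$. Let $P_{mnr}$ be the poset which is the disjoint union of three pairwise incomparable chains $A_1,A_2,A_3$ with $|A_1|=m-1$, $|A_2|=n-1$, $|A_3|=r-1$, and let $L_{mnr}=\mathcal J(P_{mnr})$ be the distributive lattice of order ideals (downward closed subsets) of $P_{mnr}$, ordered by inclusion. Then $R/I_{mn}^r\cong K[L_{mnr}]$.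
   Context: For a finite lattice $L$, the Hibi ring is $K[L]=K[x_u\mid u\in L]/(x_{u_1}x_{u_2}-x_{u_1\wedge u_2}x_{u_1\vee u_2}\mid u_1,u_2\in L)$. In $\mathcal J(P)$ the meet is intersection and the join is union. *)

From HB Require Import structures.
From mathcomp Require Import all_boot all_order all_algebra.
From mathcomp Require Import mpoly.

Set Implicit Arguments.
Unset Strict Implicit.
Unset Printing Implicit Defensive.

Import GRing.Theory.
Local Open Scope ring_scope.

Definition ideal_gen (R : comNzRingType) (G : R -> Prop) : R -> Prop :=
  fun p => exists s : seq (R * R),
    (forall q, q \in s -> G q.2) /\ p = \sum_(q <- s) q.1 * q.2.

(* variable index (i, j, k) : row i < m, column j < n, matrix index k < r *)
Definition varT (m n r : nat) : finType := ('I_m * 'I_n * 'I_r)%type.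

Definition Rpoly (K : fieldType) (m n r : nat) := {mpoly K[#|varT m n r|]}.

Definition xv (K : fieldType) (m n r : nat) (i : 'I_m) (j : 'I_n) (k : 'I_r)
  : Rpoly K m n r := 'X_(enum_rank ((i, j, k) : varT m n r)).

(* horizontal concatenation H = (X_1 ... X_r): an m x (rn) matrix, whose
   columns are indexed by pairs (k, j); entry H_{i,(k,j)} = x_{ij}^k *)
Definition Hmx (K : fieldType) (m n r : nat) (i : 'I_m) (c : 'I_r * 'I_n)
  : Rpoly K m n r := xv K i c.2 c.1.

(* vertical concatenation V: an (rm) x n matrix, whose rows are indexed by
   pairs (k, i); entry V_{(k,i),j} = x_{ij}^k *)
Definition Vmx (K : fieldType) (m n r : nat) (rw : 'I_r * 'I_m) (j : 'I_n)
  : Rpoly K m n r := xv K rw.2 j rw.1.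

(* p is a 2-minor (rows a <> b, columns c <> d; up to the sign fixed by
   the order of the rows/columns) of the matrix with entries M *)
Definition is_2minor (T : comNzRingType) (Ro Co : eqType) (M : Ro -> Co -> T)
  (p : T) : Prop :=
  exists a b c d, a <> b /\ c <> d /\ p = M a c * M b d - M a d * M b c.

Definition I_mnr (K : fieldType) (m n r : nat) : Rpoly K m n r -> Prop :=
  ideal_gen (fun p => is_2minor (@Hmx K m n r) p \/ is_2minor (@Vmx K m n r) p).

Definition Pmnr (m n r : nat) : finType :=
  ('I_m.-1 + 'I_n.-1 + 'I_r.-1)%type.

Definition Ple (m n r : nat) (x y : Pmnr m n r) : bool :=
  match x, y with
  | inl (inl a), inl (inl b) => (a <= b)%N
  | inl (inr a), inl (inr b) => (a <= b)%N
  | inr a, inr b => (a <= b)%N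
  | _, _ => false
  end.

Definition is_order_ideal (m n r : nat) (A : {set Pmnr m n r}) : bool :=
  [forall x, forall y, (Ple x y && (y \in A)) ==> (x \in A)].

Definition Lmnr (m n r : nat) : finType :=
  { A : {set Pmnr m n r} | is_order_ideal A }.

Definition Spoly (K : fieldType) (m n r : nat) := {mpoly K[#|Lmnr m n r|]}.

Definition xL (K : fieldType) (m n r : nat) (u : Lmnr m n r) : Spoly K m n r :=
  'X_(enum_rank u).

(* Hibi relations x_{u1} x_{u2} - x_{u1 /\ u2} x_{u1 \/ u2}, where in J(P)
   the meet is the intersection and the join is the union *)
Definition hibi_rel (K : fieldType) (m n r : nat) (p : Spoly K m n r) : Prop :=
  exists u1 u2 w1 w2 : Lmnr m n r,
    val w1 = val u1 :&: val u2 /\ val w2 = val u1 :|: val u2 /\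
    p = xL K u1 * xL K u2 - xL K w1 * xL K w2.

Definition J_hibi (K : fieldType) (m n r : nat) : Spoly K m n r -> Prop :=
  ideal_gen (@hibi_rel K m n r).

(* A/I ~= B/J as K-algebras, presented by K-algebra maps between the
   (free) polynomial rings A and B that respect the ideals and induce
   mutually inverse maps on the quotients. *)
Definition quot_alg_iso (K : fieldType) (A B : comAlgType K)
  (I : A -> Prop) (J : B -> Prop) : Prop :=
  exists (f : {lrmorphism A -> B}) (g : {lrmorphism B -> A}),
    (forall p, I p -> J (f p)) /\ (forall q, J q -> I (g q)) /\
    (forall p, I (g (f p) - p)) /\ (forall q, J (f (g q) - q)).

From HB Require Import structures.
From mathcomp Require Import all_boot all_order all_algebra.
From mathcomp Require Import mpoly.

(* An order ideal of a disjoint union of three chains is determined by the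
   number of elements it contains from each chain, so J(P_mnr) is the product
   of chains [m] x [n] x [r], with meet and join computed coordinatewise by min
   and max.  Renaming x_{ij}^k to the variable of the ideal with coordinates
   (i, j, k) therefore turns the Hibi relations into the binomials
   x_v x_w - x_{min(v,w)} x_{max(v,w)}.  These lie in I_{mn}^r: a 2-minor of H
   exchanges the row indices of two variables, a 2-minor of V their column
   indices, and a row exchange followed by a column exchange swaps their matrix
   indices, so the three coordinates can be sorted one at a time.  Conversely,
   every 2-minor is the difference of two such binomials with the same min and
   max. *)

Set Implicit Arguments.
Unset Strict Implicit.
Unset Printing Implicit Defensive.

Import Order.TTheory GRing.Theory.
Local Open Scope ring_scope.

Section IdealGen.
Variables (R : comNzRingType) (G : R -> Prop).

Lemma ideal_gen0 : ideal_gen G 0.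
Proof. by exists [::]; rewrite big_nil. Qed.

Lemma ideal_gen_subrr a : ideal_gen G (a - a).
Proof. by rewrite subrr; apply: ideal_gen0. Qed.

Lemma ideal_gen_mem p : G p -> ideal_gen G p.
Proof.
move=> Gp; exists [:: (1, p)]; split; last by rewrite big_seq1 mul1r.
by move=> q; rewrite inE => /eqP ->.
Qed.

Lemma ideal_genD p q : ideal_gen G p -> ideal_gen G q -> ideal_gen G (p + q).
Proof.
move=> [s [Gs ->]] [t [Gt ->]]; exists (s ++ t); split; last by rewrite big_cat.
by move=> x; rewrite mem_cat => /orP [/Gs|/Gt].
Qed.

Lemma ideal_genMl c p : ideal_gen G p -> ideal_gen G (c * p).
Proof.
move=> [s [Gs ->]]; exists [seq (c * x.1, x.2) | x <- s]; split.
  by move=> _ /mapP [x xs ->]; exact: Gs xs.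
by rewrite big_map mulr_sumr; apply: eq_bigr => x _; rewrite mulrA.
Qed.

Lemma ideal_genN p : ideal_gen G p -> ideal_gen G (- p).
Proof. by rewrite -mulN1r; apply: ideal_genMl. Qed.

Lemma ideal_gen_trans a b c :
  ideal_gen G (a - b) -> ideal_gen G (b - c) -> ideal_gen G (a - c).
Proof. by move=> Iab Ibc; rewrite -[a](subrK b) -addrA; apply: ideal_genD. Qed.

Lemma ideal_gen_sym a b : ideal_gen G (a - b) -> ideal_gen G (b - a).
Proof. by move=> Iab; rewrite -opprB; apply: ideal_genN. Qed.

End IdealGen.

Lemma ideal_gen_rmorph (R S : comNzRingType) (f : {rmorphism R -> S})
    (G : R -> Prop) (G' : S -> Prop) :
  (forall q, G q -> ideal_gen G' (f q)) ->
  forall p, ideal_gen G p -> ideal_gen G' (f p).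
Proof.
move=> fG _ [s [Gs ->]]; rewrite rmorph_sum.
elim: s Gs => [|x s IHs] Gs; first by rewrite big_nil; apply: ideal_gen0.
rewrite big_cons rmorphM; apply: ideal_genD.
  by apply/ideal_genMl/fG/Gs; rewrite inE eqxx.
by apply: IHs => q qs; apply: Gs; rewrite inE qs orbT.
Qed.

Lemma comp_mpolyA (R : comNzRingType) (n k l : nat) (p : {mpoly R[n]})
    (lq : n.-tuple {mpoly R[k]}) (lr : k.-tuple {mpoly R[l]}) :
  (p \mPo lq) \mPo lr = p \mPo [tuple tnth lq i \mPo lr | i < n].
Proof.
rewrite [p \mPo lq]comp_mpolyEX [RHS]comp_mpolyEX raddf_sum.
apply: eq_bigr => m _.
rewrite /= comp_mpolyZ !comp_mpolyX rmorph_prod; congr (_ *: _).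
by apply: eq_bigr => i _; rewrite rmorphXn tnth_mktuple.
Qed.

Section Relabel.
Variable R : comNzRingType.

Definition relabel (T U : finType) (h : T -> U) : {mpoly R[#|T|]} -> {mpoly R[#|U|]} :=
  comp_mpoly [tuple 'X_(enum_rank (h (enum_val i))) | i < #|T|].

HB.instance Definition _ (T U : finType) (h : T -> U) :=
  GRing.LRMorphism.on (relabel h).

Lemma relabelX (T U : finType) (h : T -> U) t :
  relabel h 'X_(enum_rank t) = 'X_(enum_rank (h t)).
Proof. by rewrite /relabel comp_mpolyXU -tnth_nth tnth_mktuple enum_rankK. Qed.

Lemma relabelK (T U : finType) (h : T -> U) (h' : U -> T) :
  cancel h h' -> cancel (relabel h) (relabel h').
Proof.
move=> hK p; rewrite /relabel comp_mpolyA -[RHS]comp_mpoly_id; congr (_ \mPo _).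
apply: eq_from_tnth => i; rewrite !tnth_mktuple.
by rewrite comp_mpolyXU -tnth_nth tnth_mktuple enum_rankK hK enum_valK.
Qed.

End Relabel.

Lemma val_ord_min p (a b : 'I_p) : (Order.min a b : nat) = minn a b.
Proof. by rewrite /Order.min /minn ltEord; case: ifP. Qed.

Lemma val_ord_max p (a b : 'I_p) : (Order.max a b : nat) = maxn a b.
Proof. by rewrite /Order.max /maxn ltEord; case: ifP. Qed.

Lemma card_ord_lt p i : (i <= p)%N -> #|[set a : 'I_p | (a < i)%N]| = i.
Proof.
move=> le_ip; have widen_inj : injective (widen_ord le_ip).
  by move=> a b [] /val_inj.
rewrite -[RHS]card_ord -(card_imset _ widen_inj).
apply: eq_card => a; rewrite inE; apply/idP/imsetP => [lt_ai|[b _ ->]].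
  by exists (Ordinal lt_ai) => //; apply: val_inj.
exact: ltn_ord b.
Qed.

Lemma card_ord_set_ltS p (S : {set 'I_p}) : (#|S| < p.+1)%N.
Proof. by rewrite ltnS -[p in (_ <= p)%N]card_ord max_card. Qed.

Definition height p (S : {set 'I_p}) : 'I_p.+1 := Ordinal (card_ord_set_ltS S).

Lemma downset_ordE p (S : {set 'I_p}) :
  (forall a b : 'I_p, (a <= b)%N -> b \in S -> a \in S) ->
  forall a : 'I_p, (a \in S) = (a < #|S|)%N.
Proof.
move=> downS a; apply/idP/idP => [aS|].
  rewrite -(card_ord_lt (ltn_ord a)); apply: subset_leq_card.
  by apply/subsetP => b; rewrite inE ltnS => le_ba; apply: downS le_ba aS.
apply: contraTT => aNS; rewrite -leqNgt -(card_ord_lt (ltnW (ltn_ord a))).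
apply: subset_leq_card; apply/subsetP => b bS; rewrite inE ltnNge.
by apply: contra aNS => le_ab; apply: downS bS.
Qed.

Lemma order_ideal_le m n r (A : Lmnr m n r) x y :
  Ple x y -> y \in val A -> x \in val A.
Proof.
case: A => A /= /forallP /(_ x) /forallP /(_ y) /implyP idealA le_xy yA.
by apply: idealA; rewrite le_xy yA.
Qed.

Section ChainIdeals.
Variables m n r : nat.
Local Notation P := (Pmnr m.+1 n.+1 r.+1).
Local Notation L := (Lmnr m.+1 n.+1 r.+1).
Local Notation V := (varT m.+1 n.+1 r.+1).

Definition inA1 (a : 'I_m) : P := inl (inl a).
Definition inA2 (b : 'I_n) : P := inl (inr b).
Definition inA3 (c : 'I_r) : P := inr c.

Definition ideal_of (v : V) : {set P} :=
  [set x : P | match x with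
               | inl (inl a) => (a < v.1.1)%N
               | inl (inr b) => (b < v.1.2)%N
               | inr c => (c < v.2)%N
               end].

Lemma ideal_of_is_order_ideal v : is_order_ideal (ideal_of v).
Proof.
apply/forallP => x; apply/forallP => y; apply/implyP => /andP [].
by case: x => [[a|a]|a]; case: y => [[b|b]|b] //=; rewrite !inE; exact: leq_ltn_trans.
Qed.

Definition lattice_of (v : V) : L := exist _ (ideal_of v) (ideal_of_is_order_ideal v).

Definition coords (A : L) : V :=
  (height (inA1 @^-1: val A), height (inA2 @^-1: val A), height (inA3 @^-1: val A)).

Lemma lattice_ofK : cancel lattice_of coords.
Proof.
case=> [[i j] k]; congr (_, _, _); apply: val_inj => /=.
- by rewrite -[RHS](card_ord_lt (ltnSE (ltn_ord i))); apply: eq_card => a; rewrite !inE.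
- by rewrite -[RHS](card_ord_lt (ltnSE (ltn_ord j))); apply: eq_card => b; rewrite !inE.
- by rewrite -[RHS](card_ord_lt (ltnSE (ltn_ord k))); apply: eq_card => c; rewrite !inE.
Qed.

Lemma coordsK : cancel coords lattice_of.
Proof.
move=> A; apply: val_inj; apply/setP => x; rewrite inE.
have downA p (f : 'I_p -> P) : {homo f : a b / (a <= b)%N >-> Ple a b} ->
    forall a b : 'I_p, (a <= b)%N -> b \in f @^-1: val A -> a \in f @^-1: val A.
  by move=> f_mono a b le_ab; rewrite !inE; apply/order_ideal_le/f_mono.
case: x => [[a|b]|c] /=.
- by rewrite -(downset_ordE (downA _ inA1 _)) ?inE.
- by rewrite -(downset_ordE (downA _ inA2 _)) ?inE.
- by rewrite -(downset_ordE (downA _ inA3 _)) ?inE.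
Qed.

Lemma ideal_ofI v w :
  ideal_of v :&: ideal_of w =
  ideal_of (Order.min v.1.1 w.1.1, Order.min v.1.2 w.1.2, Order.min v.2 w.2).
Proof. by apply/setP => [[[a|b]|c]]; rewrite !inE /= val_ord_min leq_min. Qed.

Lemma ideal_ofU v w :
  ideal_of v :|: ideal_of w =
  ideal_of (Order.max v.1.1 w.1.1, Order.max v.1.2 w.1.2, Order.max v.2 w.2).
Proof. by apply/setP => [[[a|b]|c]]; rewrite !inE /= val_ord_max leq_max. Qed.

End ChainIdeals.

Section Minors.
Variables (K : fieldType) (m n r : nat).
Local Notation x := (@xv K m n r).
Local Notation I := (@I_mnr K m n r).

Lemma I_mnr_Hminor a b c d : I (Hmx K a c * Hmx K b d - Hmx K a d * Hmx K b c).
Proof.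
have [<-|neq_ab] := eqVneq a b.
  by rewrite [Hmx K a d * _]mulrC; apply: ideal_gen_subrr.
have [<-|neq_cd] := eqVneq c d; first exact: ideal_gen_subrr.
by apply: ideal_gen_mem; left; exists a, b, c, d; split; [apply/eqP|split; [apply/eqP|]].
Qed.

Lemma I_mnr_Vminor a b c d : I (Vmx K a c * Vmx K b d - Vmx K a d * Vmx K b c).
Proof.
have [<-|neq_ab] := eqVneq a b.
  by rewrite [Vmx K a d * _]mulrC; apply: ideal_gen_subrr.
have [<-|neq_cd] := eqVneq c d; first exact: ideal_gen_subrr.
by apply: ideal_gen_mem; right; exists a, b, c, d; split; [apply/eqP|split; [apply/eqP|]].
Qed.

Lemma I_mnr_swap_row i i' j j' k k' :
  I (x i j k * x i' j' k' - x i' j k * x i j' k').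
Proof. by have := I_mnr_Hminor i i' (k, j) (k', j'); rewrite [x i' j k * _]mulrC. Qed.

Lemma I_mnr_swap_col i i' j j' k k' :
  I (x i j k * x i' j' k' - x i j' k * x i' j k').
Proof. exact: I_mnr_Vminor (k, i) (k', i') j j'. Qed.

Lemma I_mnr_swap_mat i i' j j' k k' :
  I (x i j k * x i' j' k' - x i j k' * x i' j' k).
Proof.
apply: ideal_gen_trans (I_mnr_swap_row _ _ _ _ _ _) _.
by rewrite [x i j k' * _]mulrC; apply: I_mnr_swap_col.
Qed.

Lemma I_mnr_sort i i' j j' k k' :
  I (x i j k * x i' j' k' -
     x (Order.min i i') (Order.min j j') (Order.min k k') *
     x (Order.max i i') (Order.max j j') (Order.max k k')).
Proof.
set i0 := Order.min i i'; set i1 := Order.max i i'.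
set j0 := Order.min j j'; set j1 := Order.max j j'.
have sort_row : I (x i j k * x i' j' k' - x i0 j k * x i1 j' k').
  by rewrite /i0 /i1; case: leP => _; [exact: ideal_gen_subrr|exact: I_mnr_swap_row].
have sort_col : I (x i0 j k * x i1 j' k' - x i0 j0 k * x i1 j1 k').
  by rewrite /j0 /j1; case: leP => _; [exact: ideal_gen_subrr|exact: I_mnr_swap_col].
have sort_mat : I (x i0 j0 k * x i1 j1 k' -
                   x i0 j0 (Order.min k k') * x i1 j1 (Order.max k k')).
  by case: leP => _; [exact: ideal_gen_subrr|exact: I_mnr_swap_mat].
exact: ideal_gen_trans (ideal_gen_trans sort_row sort_col) sort_mat.
Qed.

End Minors.

Section Correspondence.
Variables (K : fieldType) (m n r : nat).
Local Notation I := (@I_mnr K m.+1 n.+1 r.+1).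
Local Notation J := (@J_hibi K m.+1 n.+1 r.+1).
Local Notation lat := (@lattice_of m n r).

Lemma J_hibi_sort i i' j j' k k' :
  J (xL K (lat (i, j, k)) * xL K (lat (i', j', k')) -
     xL K (lat (Order.min i i', Order.min j j', Order.min k k')) *
     xL K (lat (Order.max i i', Order.max j j', Order.max k k'))).
Proof.
apply: ideal_gen_mem; do 4 eexists; split; last split; last by [].
- by rewrite /= ideal_ofI.
- by rewrite /= ideal_ofU.
Qed.

Lemma relabel_xv i j k : relabel lat (xv K i j k) = xL K (lat (i, j, k)).
Proof. exact: relabelX. Qed.

Lemma relabel_xL i j k :
  relabel (@coords m n r) (xL K (lat (i, j, k))) = xv K i j k.
Proof. by rewrite /xL relabelX lattice_ofK. Qed.

Lemma relabel_I_mnr_gen q :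
  is_2minor (@Hmx K m.+1 n.+1 r.+1) q \/ is_2minor (@Vmx K m.+1 n.+1 r.+1) q ->
  J (relabel lat q).
Proof.
case=> -[a [b [c [d [_ [_ ->]]]]]];
  rewrite rmorphB !rmorphM /= /Hmx /Vmx !relabel_xv;
  apply: ideal_gen_trans (J_hibi_sort _ _ _ _ _ _) _; apply: ideal_gen_sym.
- by rewrite (minC c.1) (maxC c.1) (minC c.2) (maxC c.2); apply: J_hibi_sort.
- by rewrite (minC c) (maxC c); apply: J_hibi_sort.
Qed.

Lemma relabel_hibi_rel q : hibi_rel q -> I (relabel (@coords m n r) q).
Proof.
case=> u1 [u2 [w1 [w2 [Ew1 [Ew2 ->]]]]].
rewrite -(coordsK u1) -(coordsK u2) in Ew1 Ew2 *.
move: (coords u1) (coords u2) Ew1 Ew2 => [[i j] k] [[i' j'] k'] Ew1 Ew2.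
have -> : w1 = lat (Order.min i i', Order.min j j', Order.min k k').
  by apply: val_inj; rewrite Ew1 ideal_ofI.
have -> : w2 = lat (Order.max i i', Order.max j j', Order.max k k').
  by apply: val_inj; rewrite Ew2 ideal_ofU.
by rewrite rmorphB !rmorphM /= !relabel_xL; apply: I_mnr_sort.
Qed.

End Correspondence.

Theorem corollary3p5 (K : fieldType) (m n r : nat) :
  (0 < m)%N -> (0 < n)%N -> (0 < r)%N ->
  quot_alg_iso (@I_mnr K m n r) (@J_hibi K m n r).
Proof.
case: m => // m _; case: n => // n _; case: r => // r _.
exists (relabel (@lattice_of m n r)), (relabel (@coords m n r)).
split; last split; last split.
- exact: ideal_gen_rmorph (@relabel_I_mnr_gen K m n r).
- exact: ideal_gen_rmorph (@relabel_hibi_rel K m n r).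
- by move=> p; rewrite /= (relabelK (@lattice_ofK m n r)); apply: ideal_gen_subrr.
- by move=> q; rewrite /= (relabelK (@coordsK m n r)); apply: ideal_gen_subrr.
Qed.
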